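(* Fix $j\in\{1,\ldots,K\}$ and $\Gamma^c_j\in\mathbb{R}$. For every $N\ge 1$, the circulation of $\psi^*_{N,j}$ around $L_j$ equals $\Gamma^c_j\frac{2K-1}{K}$, and its circulation around $L_k$ equals $-\Gamma^c_j/K$ for every $k\ne j$.
   Context: Let $K\ge 2$. Let $L_k=\{z:|z-c_k|=R_k\}$, $k=1,\dots,K$, be circles in $\mathbb{C}$ with pairwise disjoint closed disks, $\operatorname{int}L_k$ the open disk, and $T_k(z)=c_k+\frac{R_k^2}{\bar z-\bar c_k}$ the inversion in $L_k$, with $T_k(c_k)=\infty$, $T_k(\infty)=c_k$. For $M\ge0$, the level-$M$ points of $c_j$ are the multiset $T_{i_1}\circ\cdots\circ T_{i_M}(c_j)$ over words $(i_1,\ldots,i_M)\in\{1,\ldots,K\}^M$ with $i_k\ne i_{k+1}$ (level 0 is $c_j$; the level-1 point $T_j(c_j)=\infty$ is one of them). Define $\psi_{N,j}(z)=-\frac{\Gamma^c_j}{2\pi}\sum_{M=0}^{N}(-1)^M\sum_{\zeta\in\text{level }M,\ \zeta\ne\infty}\log|z-\zeta|$ (the term for $\zeta=\infty$ is omitted) and $\psi^*_{N,j}=\frac{(K-1)\psi_{N,j}+\psi_{N+1,j}}{K}$. Circulation: for a finite sum $\psi(z)=-\frac{1}{2\pi}\sum_k\Gamma_k\log|z-\zeta_k|$ with no $\zeta_k$ on $L$, the circulation around a circle $L$ is the sum of $\Gamma_k$ over $\zeta_k$ inside $L$ (equivalently $-\oint_{L}\partial\psi/\partial n\,ds$, counterclockwise,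 outward normal). *)

(* Points of C are encoded as pairs (x,y) over an arbitrary
   real field R; the point at infinity is encoded by [None] in [option]. *)
From HB Require Import structures.
From mathcomp Require Import all_boot all_order all_algebra.
Set Implicit Arguments. Unset Strict Implicit. Unset Printing Implicit Defensive.
Import Order.TTheory GRing.Theory Num.Theory.
Local Open Scope ring_scope.

Section Defs.
Variable R : realFieldType.

Definition pt := (R * R)%type.

Definition psub (z w : pt) : pt := (z.1 - w.1, z.2 - w.2).

Definition sqn (z : pt) : R := z.1 ^+ 2 + z.2 ^+ 2.

(* inversion T(z) = c + rad^2 / conj(z - c) = c + rad^2 (z - c) / |z - c|^2, z <> c *)
Definition inv_pt (c : pt) (rad : R) (z : pt) : pt :=
  let w := psub z c in
  (c.1 + rad ^+ 2 * w.1 / sqn w, c.2 + rad ^+ 2 * w.2 / sqn w).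

Definition inv_ext (c : pt) (rad : R) (p : option pt) : option pt :=
  match p with
  | None => Some c
  | Some z => if z == c then None else Some (inv_pt c rad z)
  end.

Variable K : nat.
Variable c : 'I_K -> pt.
Variable rad : 'I_K -> R.

Definition word_ok (w : seq 'I_K) : bool := sorted (fun a b => a != b) w.

Definition level_point (j : 'I_K) (w : seq 'I_K) : option pt :=
  foldr (fun i p => inv_ext (c i) (rad i) p) (Some (c j)) w.

(* the multiset of finite level-M points of c_j (the point oo is dropped) *)
Definition level_pts (j : 'I_K) (M : nat) : seq pt :=
  pmap (fun t : M.-tuple 'I_K =>
          if word_ok t then level_point j t else None)
       (enum {: M.-tuple 'I_K}).

(* A finite point-vortex stream function
   psi(z) = -(1/2pi) sum_k Gamma_k log|z - zeta_k|
   is represented by its list of (zeta_k, Gamma_k). *)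
Definition vortices := seq (pt * R).

Definition scale_v (a : R) (s : vortices) : vortices :=
  [seq (p.1, a * p.2) | p <- s].

Definition psiN (j : 'I_K) (Gam : R) (N : nat) : vortices :=
  flatten [seq [seq (z, Gam * (-1) ^+ M) | z <- level_pts j M] | M <- iota 0 N.+1].

Definition psiStar (j : 'I_K) (Gam : R) (N : nat) : vortices :=
  scale_v ((K.-1)%:R / K%:R) (psiN j Gam N) ++ scale_v (K%:R)^-1 (psiN j Gam N.+1).

End Defs.

Definition circulation (R : realFieldType) (c0 : pt R) (r0 : R) (s : vortices R) : R :=
  \sum_(p <- s | sqn (psub p.1 c0) < r0 ^+ 2) p.2.

From HB Require Import structures.
From mathcomp Require Import all_boot all_order all_algebra.
From mathcomp Require Import ring.
Set Implicit Arguments. Unset Strict Implicit. Unset Printing Implicit Defensive.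
Import Order.TTheory GRing.Theory Num.Theory.
Local Open Scope ring_scope.

(* An admissible word [i_1 ... i_M] other than [[j]] sends [c_j] into the disk of its
   first letter [i_1]: the inversion [T_i] maps the exterior of [L_i] into [L_i], and by
   disjointness the point it is applied to lies outside [L_i]; the word [[j]] sends [c_j]
   to [oo].  Hence the number of level-[M] points inside [L_k] is [k = j] for [M = 0],
   [k <> j] for [M = 1], and [(K-1)^(M-1)] for [M >= 2].  The circulation of [psi_{N,j}]
   around [L_k] is the alternating sum of these counts; as they grow with ratio [K - 1]
   from [M = 2] on, [(K-1) psi_{N,j} + psi_{N+1,j}] has the same circulation for every
   [N >= 1], namely its value [2K [k = j] - 1] at [N = 1]. *)

Lemma sqn_psubxx (R : realFieldType) (z : pt R) : sqn (psub z z) = 0.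
Proof. by rewrite /sqn /psub !subrr expr0n addr0. Qed.

(* Also true for [z = c0]: both sides are [0] since [x / 0 = 0]. *)
Lemma sqn_inv_pt (R : realFieldType) (c0 z : pt R) (r : R) :
  sqn (psub (inv_pt c0 r z) c0) = r ^+ 4 / sqn (psub z c0).
Proof.
rewrite /inv_pt /psub /sqn /= ![c0.1 + _]addrC ![c0.2 + _]addrC !addrK.
set s := (z.1 - c0.1) ^+ 2 + (z.2 - c0.2) ^+ 2.
have [->|s0] := eqVneq s 0; first by rewrite invr0 !mulr0 expr0n /= addr0.
by rewrite !expr_div_n -mulrDl !exprMn -mulrDr -/s; field.
Qed.

Lemma inv_pt_inside (R : realFieldType) (c0 z : pt R) (r : R) :
  0 < r -> r ^+ 2 < sqn (psub z c0) -> sqn (psub (inv_pt c0 r z) c0) < r ^+ 2.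
Proof.
move=> r_gt0 out_z; have s_gt0 := le_lt_trans (sqr_ge0 r) out_z.
by rewrite sqn_inv_pt ltr_pdivrMr // (exprD r 2 2) ltr_pM2l // exprn_gt0.
Qed.

Lemma inv_ext_Some (R : realFieldType) (c0 z : pt R) (r : R) :
  r ^+ 2 < sqn (psub z c0) -> inv_ext c0 r (Some z) = Some (inv_pt c0 r z).
Proof.
rewrite /inv_ext; case: eqP => // ->.
by rewrite sqn_psubxx ltNge sqr_ge0.
Qed.

Lemma circulation_cat (R : realFieldType) (c0 : pt R) (r0 : R) (s1 s2 : vortices R) :
  circulation c0 r0 (s1 ++ s2) = circulation c0 r0 s1 + circulation c0 r0 s2.
Proof. by rewrite /circulation big_cat. Qed.

Lemma circulation_flatten (R : realFieldType) (c0 : pt R) (r0 : R) (ss : seq (vortices R)) :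
  circulation c0 r0 (flatten ss) = \sum_(s <- ss) circulation c0 r0 s.
Proof. by rewrite /circulation big_flatten. Qed.

Lemma circulation_scale (R : realFieldType) (c0 : pt R) (r0 a : R) (s : vortices R) :
  circulation c0 r0 (scale_v a s) = a * circulation c0 r0 s.
Proof. by rewrite /circulation big_map mulr_sumr. Qed.

Lemma circulation_const (R : realFieldType) (c0 : pt R) (r0 a : R) (zs : seq (pt R)) :
  circulation c0 r0 [seq (z, a) | z <- zs] =
  a *+ count (fun z => sqn (psub z c0) < r0 ^+ 2) zs.
Proof. by rewrite /circulation big_map big_const_seq iter_addr_0. Qed.

Lemma count_pmap (T U : Type) (f : T -> option U) (P : pred U) (s : seq T) :
  count P (pmap f s) = count (fun x => oapp P false (f x)) s.
Proof. by elim: s => //= x s IHs; case: (f x) => /= [u|]; rewrite IHs. Qed.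

Lemma count_enumT (T : finType) (P : pred T) : (count P (enum T) = \sum_(t : T) P t)%N.
Proof. by rewrite -sum1_count big_mkcond enumT. Qed.

Lemma big_tuple0 (R : Type) (idx : R) (op : Monoid.law idx) (T : finType) (F : seq T -> R) :
  \big[op/idx]_(t : 0.-tuple T) F t = F [::].
Proof.
rewrite (eq_bigr (fun _ => F [::])) => [|t _]; last by rewrite tuple0.
by rewrite big_const card_tuple /= Monoid.mulm1.
Qed.

Lemma big_tuple_cons (R : Type) (idx : R) (op : Monoid.com_law idx)
    (T : finType) (M : nat) (F : seq T -> R) :
  \big[op/idx]_(t : M.+1.-tuple T) F t =
  \big[op/idx]_(x : T) \big[op/idx]_(t : M.-tuple T) F (x :: t).
Proof.
rewrite pair_big (reindex (fun p : T * M.-tuple T => cons_tuple p.1 p.2)) //.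
exists (fun t : M.+1.-tuple T => (thead t, behead_tuple t)) => [[x t] _|t _] /=.
  by congr pair; apply: val_inj.
by apply: val_inj; case: t => [[|x s] //].
Qed.

Lemma sum_path_neq (T : finType) (x : T) (M : nat) :
  (\sum_(t : M.-tuple T) path (fun a b => a != b) x t = #|T|.-1 ^ M)%N.
Proof.
elim: M x => [|M IHM] x; first by rewrite (big_tuple0 _ (fun s => nat_of_bool (path _ x s))).
rewrite (big_tuple_cons _ _ (fun s => nat_of_bool (path _ x s))) /=.
rewrite (eq_bigr (fun y => (x != y) * #|T|.-1 ^ M)%N); last first.
  move=> y _; rewrite -(IHM y); case: (x != y); first by rewrite mul1n.
  by rewrite mul0n big1.
rewrite -big_distrl /= -big_mkcond sum1_card expnS; congr (_ * _)%N.
by rewrite -(cardC1 x); apply: eq_card => y; rewrite unfold_in /= eq_sym.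
Qed.

Definition alt_sum (R : pzRingType) (a : nat -> R) (N : nat) : R :=
  \sum_(M < N.+1) (-1) ^+ M * a M.

Lemma alt_sumS (R : pzRingType) (a : nat -> R) (N : nat) :
  alt_sum a N.+1 = alt_sum a N + (-1) ^+ N.+1 * a N.+1.
Proof. by rewrite /alt_sum big_ord_recr. Qed.

Lemma alt_sum_shift_invariant (R : comPzRingType) (x : R) (a : nat -> R) :
  (forall M, a M.+3 = x * a M.+2) ->
  forall N, x * alt_sum a N.+1 + alt_sum a N.+2 = x * alt_sum a 1 + alt_sum a 2.
Proof.
move=> a_rec; elim=> // N <-.
rewrite (alt_sumS a N.+2) (alt_sumS a N.+1) a_rec !exprS; set s := (-1) ^+ N; ring.
Qed.

Section DiskConfiguration.
Variables (R : realFieldType) (K : nat) (c : 'I_K -> pt R) (rad : 'I_K -> R).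
Hypothesis rad_gt0 : forall k, 0 < rad k.
Hypothesis disjoint_disks : forall i k : 'I_K, i != k -> forall z : pt R,
  ~ (sqn (psub z (c i)) <= rad i ^+ 2 /\ sqn (psub z (c k)) <= rad k ^+ 2).

Definition inside (k : 'I_K) (z : pt R) : bool := sqn (psub z (c k)) < rad k ^+ 2.

Definition inside_ext (k : 'I_K) (p : option (pt R)) : bool := oapp (inside k) false p.

Lemma center_inside k : inside k (c k).
Proof. by rewrite /inside sqn_psubxx exprn_gt0. Qed.

Lemma outside_other i k z : i != k -> inside i z -> rad k ^+ 2 < sqn (psub z (c k)).
Proof.
move=> ik in_i; rewrite ltNge; apply/negP => in_k.
exact: (disjoint_disks ik (conj (ltW in_i) in_k)).
Qed.

Lemma inside_ext_uniq i k p : inside_ext i p -> inside_ext k p -> i = k.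
Proof.
case: p => //= z in_i in_k; apply/eqP; apply: contraTT in_k => ik.
by rewrite /inside -leNgt ltW // (outside_other ik).
Qed.

Lemma inside_center k j : inside k (c j) = (k == j).
Proof.
apply/idP/eqP => [in_k|->]; last exact: center_inside.
exact: (@inside_ext_uniq k j (Some (c j)) in_k (center_inside j)).
Qed.

Lemma inside_inv_ext i k p :
  i != k -> inside_ext k p -> inside_ext i (inv_ext (c i) (rad i) p).
Proof.
case: p => // z ik in_k; rewrite eq_sym in ik; have out_i := outside_other ik in_k.
by rewrite inv_ext_Some //= /inside inv_pt_inside.
Qed.

Lemma level_point_cons j i w :
  level_point c rad j (i :: w) = inv_ext (c i) (rad i) (level_point c rad j w).
Proof. by []. Qed.

Lemma level_point_self j : level_point c rad j [:: j] = None.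
Proof. by rewrite /level_point /= eqxx. Qed.

Lemma inside_ext_level_point j i w : word_ok (i :: w) -> i :: w != [:: j] ->
  inside_ext i (level_point c rad j (i :: w)).
Proof.
elim: w i => [|i' w IHw] i.
  rewrite eqseq_cons andbT => _ ij.
  by rewrite level_point_cons; apply: inside_inv_ext ij _; exact: center_inside.
case/andP=> ii' ok_w' _.
have [e|ne] := eqVneq (i' :: w) [:: j].
  by rewrite level_point_cons e level_point_self /= center_inside.
by rewrite level_point_cons; apply: inside_inv_ext ii' (IHw i' ok_w' ne).
Qed.

Definition inside_word j k (w : seq 'I_K) : nat :=
  word_ok w && inside_ext k (level_point c rad j w).

Lemma inside_word_cons j i k w :
  inside_word j k (i :: w) = [&& i == k, word_ok (i :: w) & i :: w != [:: j]] :> nat.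
Proof.
rewrite /inside_word; congr nat_of_bool.
have [ok_w|] := boolP (word_ok (i :: w)); last by rewrite andbF.
have [->|ne] := eqVneq (i :: w) [:: j]; first by rewrite level_point_self /= andbF.
have in_i := inside_ext_level_point ok_w ne.
rewrite andTb [RHS]/= andbT.
by apply/idP/eqP => [/(inside_ext_uniq in_i)|<-].
Qed.

Lemma count_inside_level_pts j k M :
  count (inside k) (level_pts c rad j M) = (\sum_(t : M.-tuple 'I_K) inside_word j k t)%N.
Proof.
rewrite /level_pts count_pmap count_enumT; apply: eq_bigr => t _.
by rewrite /inside_word; case: (word_ok t).
Qed.

Lemma count_inside_level_pts0 j k : count (inside k) (level_pts c rad j 0) = (k == j).
Proof.
rewrite count_inside_level_pts (big_tuple0 _ (inside_word j k)).
by rewrite /inside_word /= inside_center.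
Qed.

Lemma count_inside_level_ptsS j k M :
  count (inside k) (level_pts c rad j M.+1) =
  (\sum_(t : M.-tuple 'I_K) (word_ok (k :: t) && (k :: t != [:: j])))%N.
Proof.
rewrite count_inside_level_pts (big_tuple_cons _ _ (inside_word j k)) (bigD1 k) //=.
rewrite [X in (_ + X)%N]big1 ?addn0; last first.
  by move=> i ik; apply: big1 => t _; rewrite inside_word_cons (negbTE ik).
by apply: eq_bigr => t _; rewrite inside_word_cons eqxx.
Qed.

Lemma count_inside_level_pts1 j k : count (inside k) (level_pts c rad j 1) = (k != j).
Proof.
rewrite count_inside_level_ptsS.
rewrite (big_tuple0 _ (fun w => nat_of_bool (word_ok (k :: w) && (k :: w != [:: j])))).
by rewrite /= eqseq_cons andbT.
Qed.

Lemma count_inside_level_ptsSS j k M :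
  count (inside k) (level_pts c rad j M.+2) = (K.-1 ^ M.+1)%N.
Proof.
have := sum_path_neq k M.+1; rewrite card_ord count_inside_level_ptsS => <-.
apply: eq_bigr => -[[|x s] //= _].
by rewrite eqseq_cons andbF andbT.
Qed.

Lemma circulation_psiN j k Gam N :
  circulation (c k) (rad k) (psiN c rad j Gam N) =
  Gam * alt_sum (fun M => (count (inside k) (level_pts c rad j M))%:R) N.
Proof.
rewrite /psiN circulation_flatten big_map -[iota 0 N.+1]/(index_iota 0 N.+1).
rewrite big_mkord /alt_sum mulr_sumr; apply: eq_bigr => M _.
by rewrite circulation_const mulr_natr mulrnAr.
Qed.

Lemma circulation_psiStar j k Gam N : (0 < N)%N ->
  circulation (c k) (rad k) (psiStar c rad j Gam N) =
  Gam * (2 * K%:R * (k == j)%:R - 1) / K%:R.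
Proof.
case: N => // N _; rewrite /psiStar circulation_cat !circulation_scale !circulation_psiN.
set a := fun M => _.
have a_rec M : a M.+3 = (K.-1)%:R * a M.+2.
  by rewrite /a !count_inside_level_ptsSS -natrM -expnS.
have K_gt0 : (0 < K)%N := leq_ltn_trans (leq0n j) (ltn_ord j).
have K_neq0 : K%:R != 0 :> R by rewrite pnatr_eq0 -lt0n.
transitivity (Gam * ((K.-1)%:R * alt_sum a N.+1 + alt_sum a N.+2) / K%:R).
  by field.
rewrite alt_sum_shift_invariant // !alt_sumS /alt_sum big_ord1 /a.
rewrite count_inside_level_pts0 count_inside_level_pts1 count_inside_level_ptsSS.
have K_eq : K%:R = (K.-1)%:R + 1 :> R by rewrite natr1 prednK.
rewrite K_eq in K_neq0 *.
by case: (k == j) => /=; rewrite expr0; field.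
Qed.

End DiskConfiguration.

Theorem mainTheorem8 (R : realFieldType) (K : nat) (hK : (2 <= K)%N)
  (c : 'I_K -> pt R) (rad : 'I_K -> R)
  (hrad : forall k, 0 < rad k)
  (hdisj : forall i k : 'I_K, i != k -> forall z : pt R,
      ~ (sqn (psub z (c i)) <= rad i ^+ 2 /\ sqn (psub z (c k)) <= rad k ^+ 2))
  (j : 'I_K) (Gam : R) (N : nat) (hN : (1 <= N)%N) :
  circulation (c j) (rad j) (psiStar c rad j Gam N) = Gam * (2 * K - 1)%:R / K%:R /\
  (forall k : 'I_K, k != j ->
     circulation (c k) (rad k) (psiStar c rad j Gam N) = - (Gam / K%:R)).
Proof.
have circ k := circulation_psiStar hrad hdisj j k Gam hN.
split; first by rewrite circ eqxx mulr1 natrB ?natrM // muln_gt0 (ltnW hK).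
by move=> k kj; rewrite circ (negbTE kj) mulr0 add0r mulrN1 mulNr.
Qed.
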